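(* Let $\epsilon_{\mathrm i},\epsilon_{\mathrm e},S_{\mathrm i},l_{\mathrm C}>0$; set $S=S_{\mathrm i},\epsilon=\epsilon_{\mathrm i}$ on $\xi<0$ and $S=1,\epsilon=\epsilon_{\mathrm e}$ on $\xi>0$. Suppose $\phi_-,\phi_+\in\mathbb R$ and $\tilde\phi:\mathbb R\to\mathbb R$ is continuous, $C^2$ on $(-\infty,0)$ and $(0,\infty)$ with one-sided derivatives at $0$, and satisfies $$\epsilon\,\tilde\phi''=2\sqrt S\,\sinh(\tilde\phi-\phi_\pm)\ \text{ on } \{\pm\xi>0\},\qquad \lim_{\xi\to\pm\infty}\tilde\phi(\xi)=\phi_\pm,\qquad \epsilon_{\mathrm i}\tilde\phi'(0^-)=\epsilon_{\mathrm e}\tilde\phi'(0^+),$$ and, with $\tilde q=-2\sqrt S\sinh(\tilde\phi-\phi_\pm)$ on $\{\pm\xi>0\}$, $$l_{\mathrm C}\Big(\tilde q+\sqrt{4+\tilde q^2}\Big)\Big|_{\xi=0^+}=\Big(\tilde q+\sqrt{4S_{\mathrm i}+\tilde q^2}\Big)\Big|_{\xi=0^-}.$$ Then $\phi^\Delta:=\phi_--\phi_+=\ln(l_{\mathrm C}/\sqrt{S_{\mathrm i}})$, and $$\tilde\phi(\xi)=\phi_\pm+2\ln\frac{1+A_\pm e^{\mp\lambda_\pm\xi}}{1-A_\pm e^{\mp\lambda_\pm\xi}}\quad(\pm\xi>0),$$ with $\lambda_+=\sqrt2\,\epsilon_{\mathrm e}^{-1/2}$, $\lambda_-=\sqrt2\,\epsilon_{\mathrm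 i}^{-1/2}S_{\mathrm i}^{1/4}$, $\rho=\sqrt{l_{\mathrm C}/\sqrt{S_{\mathrm i}}}$, $\zeta=\sqrt{\epsilon_{\mathrm e}/(\epsilon_{\mathrm i}\sqrt{S_{\mathrm i}})}$ and $$A_+=\frac{\sqrt{\rho(\rho+\zeta)}-\sqrt{1+\rho\zeta}}{\sqrt{\rho(\rho+\zeta)}+\sqrt{1+\rho\zeta}},\qquad A_-=\frac{\sqrt{\rho+\zeta}-\sqrt{\rho(1+\rho\zeta)}}{\sqrt{\rho+\zeta}+\sqrt{\rho(1+\rho\zeta)}}.$$ Furthermore, with $\phi^\Delta_{\mathrm i}=\tilde\phi(-\infty)-\tilde\phi(0)=-2\ln\frac{1+A_-}{1-A_-}$ and $\phi^\Delta_{\mathrm e}=\tilde\phi(0)-\tilde\phi(\infty)=2\ln\frac{1+A_+}{1-A_+}$: $\phi^\Delta_{\mathrm i}+\phi^\Delta_{\mathrm e}=\phi^\Delta$; $\phi^\Delta_{\mathrm i}$ and $\phi^\Delta_{\mathrm e}$ have the same sign; $\phi^\Delta_{\mathrm i}=\frac{\zeta}{1+\zeta}\phi^\Delta+O((\phi^\Delta)^2)$ and $\phi^\Delta_{\mathrm e}=\frac{1}{1+\zeta}\phi^\Delta+O((\phi^\Delta)^2)$; $$\int_{-\infty}^0\tilde q\,d\xi=-\int_0^\infty\tilde q\,d\xi=\big((\epsilon_{\mathrm i}\lambda_-)^{-1}+(\epsilon_{\mathrm e}\lambda_+)^{-1}\big)^{-1}\phi^\Delta+O((\phi^\Delta)^2);$$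 and $$\int_{-\infty}^{\infty}\epsilon\,(\tilde\phi')^2\,d\xi=\frac{8\lambda_+\epsilon_{\mathrm e}A_+^2}{1-A_+^2}+\frac{8\lambda_-\epsilon_{\mathrm i}A_-^2}{1-A_-^2}.$$
   Context: This describes the leading-order electric double layer at a liquid–liquid interface ($\xi<0$ interior, $\xi>0$ exterior) in the weak-electrolyte limit. Since $S_{\mathrm i}=l_{\mathrm C}l_{\mathrm A}$, one has $\phi^\Delta=\frac12\ln(l_{\mathrm C}/l_{\mathrm A})$ (the Galvani potential), where $l_{\mathrm C},l_{\mathrm A}$ are the cation and anion partition coefficients. *)

From Stdlib Require Import Reals Lra.
Open Scope R_scope.

Definition lim_pinf (f : R -> R) (l : R) : Prop :=
  forall eps, 0 < eps -> exists M, forall x, M < x -> Rabs (f x - l) < eps.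
Definition lim_minf (f : R -> R) (l : R) : Prop :=
  forall eps, 0 < eps -> exists M, forall x, x < M -> Rabs (f x - l) < eps.

Definition rderiv (f : R -> R) (x l : R) : Prop :=
  forall eps, 0 < eps -> exists del, 0 < del /\
    forall h, 0 < h < del -> Rabs ((f (x + h) - f x) / h - l) < eps.
Definition lderiv (f : R -> R) (x l : R) : Prop :=
  forall eps, 0 < eps -> exists del, 0 < del /\
    forall h, - del < h < 0 -> Rabs ((f (x + h) - f x) / h - l) < eps.

Definition is_RInt (f : R -> R) (a b I : R) : Prop :=
  exists pr : Riemann_integrable f a b, RiemannInt pr = I.

Definition improper_minf_0 (f : R -> R) (L : R) : Prop :=
  exists F : R -> R, (forall a, a < 0 -> is_RInt f a 0 (F a)) /\ lim_minf F L.
Definition improper_0_pinf (f : R -> R) (L : R) : Prop :=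
  exists F : R -> R, (forall b, 0 < b -> is_RInt f 0 b (F b)) /\ lim_pinf F L.

(* piecewise data: interior xi<0, exterior xi>0 (value at 0 taken from the + side;
   irrelevant for everything below) *)
Definition Sfun (S_i x : R) : R := if Rlt_dec x 0 then S_i else 1.
Definition epsfun (eps_i eps_e x : R) : R := if Rlt_dec x 0 then eps_i else eps_e.
Definition phipm (phim phip x : R) : R := if Rlt_dec x 0 then phim else phip.

Definition qt (S_i phim phip : R) (phit : R -> R) (x : R) : R :=
  - 2 * sqrt (Sfun S_i x) * sinh (phit x - phipm phim phip x).

Definition IsSolution (eps_i eps_e S_i l_C phim phip : R)
    (phit d1 d2 : R -> R) : Prop :=
  (forall x, continuity_pt phit x) /\
  (forall x, x <> 0 ->
     derivable_pt_lim phit x (d1 x) /\ derivable_pt_lim d1 x (d2 x) /\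
     continuity_pt d2 x) /\
  (forall x, x <> 0 ->
     epsfun eps_i eps_e x * d2 x
       = 2 * sqrt (Sfun S_i x) * sinh (phit x - phipm phim phip x)) /\
  lim_minf phit phim /\ lim_pinf phit phip /\
  (exists Dm Dp, lderiv phit 0 Dm /\ rderiv phit 0 Dp /\ eps_i * Dm = eps_e * Dp) /\
  (let qp := - 2 * sinh (phit 0 - phip) in
   let qm := - 2 * sqrt S_i * sinh (phit 0 - phim) in
   l_C * (qp + sqrt (4 + qp ^ 2)) = qm + sqrt (4 * S_i + qm ^ 2)).

Definition lam_p (eps_e : R) : R := sqrt 2 / sqrt eps_e.
Definition lam_m (eps_i S_i : R) : R := sqrt 2 / sqrt eps_i * sqrt (sqrt S_i).
Definition rho (S_i l_C : R) : R := sqrt (l_C / sqrt S_i).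
Definition zeta (eps_i eps_e S_i : R) : R := sqrt (eps_e / (eps_i * sqrt S_i)).
Definition A_p (r z : R) : R :=
  (sqrt (r * (r + z)) - sqrt (1 + r * z)) / (sqrt (r * (r + z)) + sqrt (1 + r * z)).
Definition A_m (r z : R) : R :=
  (sqrt (r + z) - sqrt (r * (1 + r * z))) / (sqrt (r + z) + sqrt (r * (1 + r * z))).

(* On each half-line the shifted potential f = phi - phi_+- satisfies f'' = k^2 sinh f with
   f -> 0 at infinity.  The first integral f'^2 = k^2 (2 cosh f - 2) shows that w = tanh (f/4)
   solves the linear equation w'' = k^2 w; boundedness kills the growing mode, so
   w = w(0) e^{-k|x|}, which is the stated profile with A_+- = tanh (f(0+-)/4).
   With a = phi(0) - phi_+ and b = phi(0) - phi_-, the flux condition becomes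
   sinh (b/2) = - zeta sinh (a/2) and the partition condition becomes l_C e^b = sqrt S_i e^a;
   these determine e^{a/2} and e^{b/2}, hence the Galvani potential and A_+-.  The relation
   between sinh (b/2) and sinh (a/2) forces the two drops to share a sign and to split in the
   ratio zeta : 1 to first order.  The charge and energy integrals have explicit primitives
   in terms of w. *)

From Pilot Require Import Defs.
From Stdlib Require Import Reals Lra.
From Coquelicot Require Import Coquelicot.
Open Scope R_scope.

(** * Elementary analysis on half-lines *)

Lemma derivable_zero_const_pos (F F' : R -> R) :
  (forall x, 0 < x -> derivable_pt_lim F x (F' x)) ->
  (forall x, 0 < x -> F' x = 0) -> forall x y, 0 < x -> 0 < y -> F x = F y.
Proof.
  intros HF HF0.
  assert (Hlt : forall x y, 0 < x -> x < y -> F x = F y).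
  { intros x y Hx Hxy.
    destruct (MVT_cor2 F F' x y Hxy) as [c [Hc Hbetween]]; [intros c Hc; apply HF; lra|].
    rewrite HF0 in Hc by lra. lra. }
  intros x y Hx Hy.
  destruct (Rtotal_order x y) as [H|[->|H]]; [auto|auto|].
  symmetry; auto.
Qed.

Lemma exists_pos_gt M : exists x, M < x /\ 0 < x.
Proof.
  exists (Rmax M 0 + 1). assert (H1 := Rmax_l M 0). assert (H2 := Rmax_r M 0). lra.
Qed.


Lemma lim_pinf_continuous_comp (f phi : R -> R) l :
  lim_pinf f l -> continuity_pt phi l -> lim_pinf (fun x => phi (f x)) (phi l).
Proof.
  intros Hf Hc eps Heps.
  destruct (Hc eps Heps) as [alp [Halp H]].
  destruct (Hf alp Halp) as [M HM].
  exists M; intros x Hx.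
  destruct (Req_dec (f x) l) as [->|E].
  - rewrite Rminus_diag, Rabs_R0; exact Heps.
  - apply (H (f x)); split; [split; [exact I|auto]|apply HM; auto].
Qed.

Lemma lim_minf_of_opp (f : R -> R) l :
  lim_pinf (fun x => f (- x)) l -> lim_minf f l.
Proof.
  intros Hf eps Heps. destruct (Hf eps Heps) as [M HM].
  exists (- M); intros x Hx.
  replace x with (- - x) by ring. apply HM; lra.
Qed.

Lemma lim_pinf_exp_decay A m : m < 0 -> lim_pinf (fun x => A * exp (m * x)) 0.
Proof.
  intros Hm eps Heps.
  assert (HA := Rabs_pos A).
  set (c := eps / (Rabs A + 1)).
  assert (Hc : 0 < c) by (apply Rdiv_lt_0_compat; lra).
  exists (ln c / m); intros x Hx.
  rewrite Rminus_0_r, Rabs_mult, (Rabs_right (exp _)) by (left; apply exp_pos).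
  assert (Hmx : m * x < ln c).
  { apply Rmult_lt_compat_l with (r := - m) in Hx; [|lra].
    replace (- m * (ln c / m)) with (- ln c) in Hx by (field; lra). lra. }
  apply exp_increasing in Hmx. rewrite exp_ln in Hmx by exact Hc.
  assert (Hce : c * (Rabs A + 1) = eps) by (unfold c; field; lra).
  assert (He := exp_pos (m * x)). nra.
Qed.

Lemma continuity_pt_zero_at_0 (F : R -> R) :
  continuity_pt F 0 -> (forall x, 0 < x -> F x = 0) -> F 0 = 0.
Proof.
  intros Hc HF. destruct (Req_dec (F 0) 0) as [|Hn]; [assumption|exfalso].
  assert (Hp : 0 < Rabs (F 0)) by (apply Rabs_pos_lt; exact Hn).
  destruct (Hc _ Hp) as [alp [Halp Hx]].
  specialize (Hx (alp / 2)). simpl in Hx. unfold R_dist in Hx.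
  rewrite HF, Rminus_0_l, Rabs_Ropp, Rminus_0_r, Rabs_right in Hx by lra.
  enough (Rabs (F 0) < Rabs (F 0)) by lra.
  apply Hx; split; [split; [exact I|lra]|lra].
Qed.

Lemma rderiv_unique (f Phi : R -> R) D l :
  rderiv f 0 D -> (forall x, 0 <= x -> f x = Phi x) ->
  derivable_pt_lim Phi 0 l -> D = l.
Proof.
  intros Hr He Hd.
  apply Rminus_diag_uniq, Rabs_eq_0, Rle_antisym; [|apply Rabs_pos].
  apply Rnot_lt_le; intro Hp.
  set (e := Rabs (D - l) / 2).
  assert (He0 : 0 < e) by (unfold e; lra).
  destruct (Hr e He0) as [d1 [Hd1 H1]].
  destruct (Hd e He0) as [d2 H2].
  assert (Hd2 := cond_pos d2).
  set (h := Rmin d1 d2 / 2).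
  assert (Hm1 := Rmin_l d1 d2). assert (Hm2 := Rmin_r d1 d2).
  assert (Hm : 0 < Rmin d1 d2) by (apply Rmin_pos; lra).
  specialize (H1 h ltac:(unfold h; lra)).
  specialize (H2 h ltac:(unfold h; lra) ltac:(rewrite Rabs_right; unfold h; lra)).
  rewrite !He in H1 by (unfold h; lra).
  set (q := (Phi (0 + h) - Phi 0) / h) in *.
  assert (Rabs (D - l) <= Rabs (q - D) + Rabs (q - l)); [|unfold e in *; lra].
  replace (D - l) with (- (q - D) + (q - l)) by ring.
  rewrite <- (Rabs_Ropp (q - D)). apply Rabs_triang.
Qed.

Lemma is_RInt_Riemann f a b I : RInt.is_RInt f a b I -> Defs.is_RInt f a b I.
Proof.
  intro H. exists (ex_RInt_Reals_0 f a b (ex_intro _ I H)).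
  rewrite <- RInt_Reals. apply is_RInt_unique, H.
Qed.

Lemma Derive_eta (f : R -> R) x l :
  derivable_pt_lim f x l -> Derive (fun y => f y) x = l.
Proof. intro H. apply is_derive_unique, is_derive_Reals, H. Qed.

Lemma derivable_pt_lim_sub_const (f : R -> R) c x l :
  derivable_pt_lim f x l -> derivable_pt_lim (fun y => f y - c) x l.
Proof.
  intro H. apply is_derive_Reals. auto_derive; [eexists; apply is_derive_Reals, H|].
  rewrite (Derive_eta _ _ _ H). ring.
Qed.

Lemma derivable_pt_lim_reflect (f : R -> R) x l :
  derivable_pt_lim f (- x) l -> derivable_pt_lim (fun y => f (- y)) x (- l).
Proof.
  intro H. apply is_derive_Reals. auto_derive; [eexists; apply is_derive_Reals, H|].
  rewrite (Derive_eta _ _ _ H). ring.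
Qed.

Lemma continuity_pt_reflect_sub (f : R -> R) c :
  continuity_pt f 0 -> continuity_pt (fun y => f (- y) - c) 0.
Proof.
  intro H. apply (continuity_pt_minus (fun y => f (- y)) (fct_cte c)).
  - apply (continuity_pt_comp Ropp f); [apply continuity_pt_opp, continuity_pt_id|].
    rewrite Ropp_0. exact H.
  - apply continuity_pt_const. intros u v. reflexivity.
Qed.

Lemma rderiv_reflect (f : R -> R) c D :
  lderiv f 0 D -> rderiv (fun y => f (- y) - c) 0 (- D).
Proof.
  intros H eps Heps. destruct (H eps Heps) as [del [Hdel Hd]]. exists del. split; [exact Hdel|].
  intros h Hh. specialize (Hd (- h) ltac:(lra)).
  replace (- (0 + h)) with (0 + - h) by ring. rewrite Ropp_0.
  replace ((f (0 + - h) - c - (f 0 - c)) / h - - D)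
    with (- ((f (0 + - h) - f 0) / - h - D)) by (field; lra).
  rewrite Rabs_Ropp. exact Hd.
Qed.

(** * The half-line problem *)

Definition cosh_excess (y : R) : R := exp y + exp (- y) - 2.

Lemma cosh_excess_ge0 y : 0 <= cosh_excess y.
Proof.
  unfold cosh_excess. rewrite exp_Ropp.
  assert (HE := exp_pos y). set (E := exp y) in *.
  replace (E + / E - 2) with ((E - 1) ^ 2 / E) by (field; lra).
  apply Rdiv_le_0_compat; [apply pow2_ge_0|lra].
Qed.

Lemma cosh_excess_continuous y : continuity_pt cosh_excess y.
Proof.
  apply derivable_continuous_pt, ex_derive_Reals_0.
  unfold cosh_excess. auto_derive. auto.
Qed.

Lemma cosh_excess_0 : cosh_excess 0 = 0.
Proof. unfold cosh_excess. rewrite Ropp_0, exp_0. ring. Qed.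

(* [tanh4 y = tanh (y / 4)] *)
Definition tanh4 (y : R) : R := (exp (y / 2) - 1) / (exp (y / 2) + 1).

Lemma Rabs_tanh4_lt_1 y : Rabs (tanh4 y) < 1.
Proof.
  unfold tanh4. assert (H := exp_pos (y / 2)).
  apply Rabs_def1; apply Rmult_lt_reg_r with (exp (y / 2) + 1); try lra;
    unfold Rdiv; rewrite Rmult_assoc, Rinv_l; lra.
Qed.

Lemma tanh4_continuous y : continuity_pt tanh4 y.
Proof.
  apply derivable_continuous_pt, ex_derive_Reals_0.
  unfold tanh4. auto_derive. assert (H := exp_pos (y * / 2)). lra.
Qed.

Lemma ln_tanh4 y : 2 * ln ((1 + tanh4 y) / (1 - tanh4 y)) = y.
Proof.
  replace ((1 + tanh4 y) / (1 - tanh4 y)) with (exp (y / 2)).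
  - rewrite ln_exp. field.
  - unfold tanh4. assert (H := exp_pos (y / 2)). field. lra.
Qed.

Lemma exp_le_1 x : x <= 0 -> exp x <= 1.
Proof.
  intros [Hx| ->]; [|rewrite exp_0; lra].
  rewrite <- exp_0. left. apply exp_increasing, Hx.
Qed.

Lemma exp_mul_opp s x : exp (s * x) * exp (- s * x) = 1.
Proof. rewrite <- exp_plus, <- exp_0. f_equal. ring. Qed.

Section BoundedLinearODE.

Variables (k : R) (w w1 : R -> R).
Hypothesis k_pos : 0 < k.
Hypothesis w_deriv : forall x, 0 < x -> derivable_pt_lim w x (w1 x).
Hypothesis w1_deriv : forall x, 0 < x -> derivable_pt_lim w1 x (k ^ 2 * w x).
Hypothesis w_bounded : forall x, 0 < x -> Rabs (w x) <= 1.

Let first_integral s x : R := (w1 x + s * w x) * exp (- s * x).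

Lemma first_integral_const s : s ^ 2 = k ^ 2 ->
  forall x, 0 < x -> first_integral s x = first_integral s 1.
Proof.
  intros Hs x Hx.
  apply (derivable_zero_const_pos (first_integral s) (fun _ => 0)); [|auto|auto|lra].
  intros y Hy. apply is_derive_Reals.
  assert (Hw := w_deriv y Hy). assert (Hw1 := w1_deriv y Hy).
  unfold first_integral. auto_derive; [repeat split; eexists; apply is_derive_Reals; eassumption|].
  rewrite (Derive_eta _ _ _ Hw), (Derive_eta _ _ _ Hw1), <- Hs. ring.
Qed.

Lemma growing_mode x : 0 < x -> w1 x + k * w x = first_integral k 1 * exp (k * x).
Proof.
  intro Hx. rewrite <- (first_integral_const k eq_refl x Hx).
  unfold first_integral. rewrite Rmult_assoc, (Rmult_comm (exp _)), exp_mul_opp. ring.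
Qed.

Lemma decaying_mode x : 0 < x -> w1 x - k * w x = first_integral (- k) 1 * exp (- k * x).
Proof.
  intro Hx. rewrite <- (first_integral_const (- k) ltac:(ring) x Hx).
  unfold first_integral. rewrite Rmult_assoc, Ropp_involutive, exp_mul_opp. ring.
Qed.

Lemma growing_mode_vanishes : first_integral k 1 = 0.
Proof.
  set (C := first_integral k 1). set (D := first_integral (- k) 1).
  destruct (Req_dec C 0) as [|HCn]; [assumption|exfalso].
  (* 2 k w = C e^{kx} - D e^{-kx} is bounded, which forces C = 0 *)
  assert (HaC : 0 < Rabs C) by (apply Rabs_pos_lt; exact HCn).
  assert (HaD := Rabs_pos D).
  set (x := (2 * k + Rabs D) / (k * Rabs C) + 1).
  assert (Hx0 : 0 < x).
  { enough (0 <= (2 * k + Rabs D) / (k * Rabs C)) by (unfold x; lra).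
    apply Rdiv_le_0_compat; [lra|nra]. }
  assert (Hwx := w_bounded x Hx0). assert (Haw := Rabs_pos (w x)).
  assert (Hep := exp_pos (k * x)). assert (Hem := exp_pos (- k * x)).
  assert (Hem1 : exp (- k * x) <= 1) by (apply exp_le_1; nra).
  assert (Hbound : Rabs C * exp (k * x) <= 2 * k + Rabs D).
  { replace (Rabs C * exp (k * x)) with (Rabs (2 * k * w x + D * exp (- k * x))).
    - eapply Rle_trans; [apply Rabs_triang|].
      rewrite !Rabs_mult, (Rabs_right (exp _)), (Rabs_right 2), (Rabs_right k) by lra.
      nra.
    - replace (2 * k * w x + D * exp (- k * x)) with (C * exp (k * x))
        by (unfold C, D; rewrite <- growing_mode, <- decaying_mode by exact Hx0; ring).
      rewrite Rabs_mult, (Rabs_right (exp _)); lra. }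
  assert (Hlin := exp_ineq1_le (k * x)).
  assert (Hkx : Rabs C * (k * x) = 2 * k + Rabs D + k * Rabs C) by (unfold x; field; lra).
  nra.
Qed.

Lemma bounded_linear_ode_decay :
  exists A, forall x, 0 < x -> w x = A * exp (- k * x) /\ w1 x = - k * w x.
Proof.
  exists (- first_integral (- k) 1 / (2 * k)). intros x Hx.
  assert (H1 := growing_mode x Hx). assert (H2 := decaying_mode x Hx).
  rewrite growing_mode_vanishes, Rmult_0_l in H1.
  split; [|lra].
  apply Rmult_eq_reg_l with (2 * k); [|lra].
  replace (2 * k * w x) with ((w1 x + k * w x) - (w1 x - k * w x)) by ring.
  rewrite H1, H2. field. lra.
Qed.

End BoundedLinearODE.

(* [slope m w] is the derivative of [2 ln ((1 + w) / (1 - w))] along [w' = m w]. *)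
Definition slope (m w : R) : R := 4 * m * w / (1 - w ^ 2).

Lemma exp_half_sq y : exp (y / 2) * exp (y / 2) = exp y.
Proof. rewrite <- exp_plus. f_equal. field. Qed.

Lemma slope_tanh4 m y : slope m (tanh4 y) = m * (exp (y / 2) - / exp (y / 2)).
Proof.
  unfold slope, tanh4. assert (HE := exp_pos (y / 2)). set (E := exp (y / 2)) in *.
  field. replace ((E + 1) ^ 2 - (E - 1) ^ 2) with (4 * E) by ring. repeat split; lra.
Qed.

Section HalfLine.

Variables (k D : R) (f g h : R -> R).
Hypothesis k_pos : 0 < k.
Hypothesis f_deriv : forall x, 0 < x -> derivable_pt_lim f x (g x).
Hypothesis g_deriv : forall x, 0 < x -> derivable_pt_lim g x (h x).
Hypothesis h_eq : forall x, 0 < x -> h x = k ^ 2 * sinh (f x).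
Hypothesis f_lim : lim_pinf f 0.

Let energy x : R := g x ^ 2 - k ^ 2 * cosh_excess (f x).

Lemma half_line_energy_const x : 0 < x -> energy x = energy 1.
Proof.
  intro Hx. apply (derivable_zero_const_pos energy (fun _ => 0)); [|auto|auto|lra].
  intros y Hy. apply is_derive_Reals.
  assert (Hf := f_deriv y Hy). assert (Hg := g_deriv y Hy).
  unfold energy, cosh_excess.
  auto_derive; [repeat split; eexists; apply is_derive_Reals; eassumption|].
  rewrite (Derive_eta _ _ _ Hf), (Derive_eta _ _ _ Hg), h_eq by exact Hy.
  unfold sinh. field.
Qed.

Lemma half_line_energy x : 0 < x -> g x ^ 2 = k ^ 2 * cosh_excess (f x).
Proof.
  intro Hx.
  enough (energy 1 = 0) by (assert (E := half_line_energy_const x Hx); unfold energy in *; lra).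
  set (c := energy 1).
  destruct (Rtotal_order c 0) as [Hneg|[Hz|Hpos]]; [exfalso| exact Hz |exfalso].
  - (* cosh_excess (f x) -> 0, so g^2 = c + k^2 cosh_excess (f x) eventually < 0 *)
    assert (Hlim := lim_pinf_continuous_comp f cosh_excess 0 f_lim (cosh_excess_continuous 0)).
    rewrite cosh_excess_0 in Hlim.
    destruct (Hlim (- c / k ^ 2)) as [M HM]; [apply Rdiv_lt_0_compat; [lra|apply pow_lt; lra]|].
    destruct (exists_pos_gt M) as [y [HyM Hy]].
    specialize (HM y HyM). rewrite Rminus_0_r, Rabs_right in HM by apply Rle_ge, cosh_excess_ge0.
    apply Rmult_lt_compat_l with (r := k ^ 2) in HM; [|nra].
    replace (k ^ 2 * (- c / k ^ 2)) with (- c) in HM by (field; lra).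
    assert (E : g y ^ 2 - k ^ 2 * cosh_excess (f y) = c) by apply (half_line_energy_const y Hy).
    assert (0 <= g y ^ 2) by apply pow2_ge_0. lra.
  - (* |g| >= sqrt c, so f moves by 3 over a length 3 / sqrt c *)
    destruct (f_lim 1 Rlt_0_1) as [M HM].
    destruct (exists_pos_gt M) as [x0 [Hx0M Hx0]].
    assert (Hsc : 0 < sqrt c) by (apply sqrt_lt_R0, Hpos).
    set (y := x0 + 3 / sqrt c).
    assert (Hy : x0 < y) by (enough (0 < 3 / sqrt c) by (unfold y; lra); apply Rdiv_lt_0_compat; lra).
    destruct (MVT_cor2 f g x0 y Hy) as [xi [Hxi Hxib]]; [intros t Ht; apply f_deriv; lra|].
    assert (Hgxi : c <= g xi ^ 2).
    { assert (E : g xi ^ 2 - k ^ 2 * cosh_excess (f xi) = c)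
        by apply (half_line_energy_const xi ltac:(lra)).
      assert (H := cosh_excess_ge0 (f xi)). nra. }
    replace (y - x0) with (3 / sqrt c) in Hxi by (unfold y; ring).
    assert (Hsq : (f y - f x0) ^ 2 = g xi ^ 2 * 9 / c).
    { rewrite Hxi. replace c with (sqrt c * sqrt c) at 2 by (apply sqrt_sqrt; lra). field. lra. }
    assert (H9 : 9 <= g xi ^ 2 * 9 / c).
    { apply Rmult_le_reg_r with c; [exact Hpos|].
      replace (g xi ^ 2 * 9 / c * c) with (g xi ^ 2 * 9) by (field; lra). nra. }
    assert (A1 := HM x0 Hx0M). assert (A2 := HM y ltac:(lra)).
    rewrite Rminus_0_r in A1, A2. apply Rabs_def2 in A1. apply Rabs_def2 in A2.
    nra.
Qed.

(* [tanh4 f] solves [w'' = k^2 w] thanks to the energy identity. *)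
Lemma half_line_tanh4_ode :
  exists A, forall x, 0 < x ->
    tanh4 (f x) = A * exp (- k * x) /\ g x = slope (- k) (tanh4 (f x)).
Proof.
  set (W1 := fun x => exp (f x / 2) * g x / (exp (f x / 2) + 1) ^ 2).
  destruct (bounded_linear_ode_decay k (fun x => tanh4 (f x)) W1 k_pos) as [A HA].
  - intros x Hx. apply is_derive_Reals.
    assert (Hf := f_deriv x Hx). assert (HE := exp_pos (f x * / 2)).
    unfold tanh4, W1. auto_derive.
    + repeat split; try (eexists; apply is_derive_Reals; eassumption); lra.
    + rewrite (Derive_eta _ _ _ Hf). unfold Rdiv in *.
      set (E := exp (f x * / 2)) in *. field. lra.
  - intros x Hx. apply is_derive_Reals.
    assert (Hf := f_deriv x Hx). assert (Hg := g_deriv x Hx).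
    assert (Hen := half_line_energy x Hx).
    unfold tanh4, W1. auto_derive.
    + repeat split; try (eexists; apply is_derive_Reals; eassumption).
      assert (H := exp_pos (f x * / 2)). apply Rgt_not_eq. nra.
    + rewrite (Derive_eta _ _ _ Hf), (Derive_eta _ _ _ Hg), h_eq by exact Hx.
      unfold cosh_excess, sinh in Hen |- *.
      rewrite exp_Ropp, <- (exp_half_sq (f x)) in Hen |- *.
      assert (HE := exp_pos (f x / 2)). unfold Rdiv in *.
      set (E := exp (f x * / 2)) in *. set (G := g x) in *.
      assert (Hz : G ^ 2 - k ^ 2 * (E * E + / (E * E) - 2) = 0) by lra.
      apply Rminus_diag_uniq.
      transitivity (E * (1 - E) / (2 * (E + 1) ^ 3) * (G ^ 2 - k ^ 2 * (E * E + / (E * E) - 2))).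
      * field. lra.
      * rewrite Hz. ring.
  - intros x Hx. left. apply Rabs_tanh4_lt_1.
  - exists A. intros x Hx. destruct (HA x Hx) as [H1 H2]. split; [exact H1|].
    rewrite slope_tanh4. unfold W1 in H2. assert (HE := exp_pos (f x / 2)).
    set (E := exp (f x / 2)) in *.
    replace (g x) with ((E * g x / (E + 1) ^ 2) * (E + 1) ^ 2 / E) by (field; lra).
    rewrite H2. unfold tanh4. fold E. field. lra.
Qed.

Hypothesis f_cont0 : continuity_pt f 0.

Lemma half_line_profile x : 0 < x ->
  tanh4 (f x) = tanh4 (f 0) * exp (- k * x) /\ g x = slope (- k) (tanh4 (f x)).
Proof.
  destruct half_line_tanh4_ode as [A HA].
  enough (HA0 : A = tanh4 (f 0)) by (subst A; apply HA).
  set (F := fun x => tanh4 (f x) - A * exp (- k * x)).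
  assert (HF : F 0 = 0).
  { apply continuity_pt_zero_at_0.
    - apply continuity_pt_minus.
      + apply (continuity_pt_comp f tanh4); [exact f_cont0|apply tanh4_continuous].
      + apply derivable_continuous_pt, ex_derive_Reals_0. auto_derive. auto.
    - intros y Hy. unfold F. rewrite (proj1 (HA y Hy)). ring. }
  unfold F in HF. rewrite Rmult_0_r, exp_0 in HF. lra.
Qed.

Hypothesis f_rderiv0 : rderiv f 0 D.

Lemma half_line_rderiv : D = slope (- k) (tanh4 (f 0)).
Proof.
  set (A := tanh4 (f 0)).
  assert (HA := Rabs_tanh4_lt_1 (f 0)). fold A in HA.
  apply Rabs_def2 in HA.
  apply (rderiv_unique f (fun x => 2 * ln ((1 + A * exp (- k * x)) / (1 - A * exp (- k * x))))).
  - exact f_rderiv0.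
  - intros x [Hx| <-].
    + unfold A. rewrite <- (proj1 (half_line_profile x Hx)). symmetry. apply ln_tanh4.
    + rewrite Rmult_0_r, exp_0, Rmult_1_r. symmetry. apply ln_tanh4.
  - apply is_derive_Reals. auto_derive.
    + rewrite Rmult_0_r, exp_0, Rmult_1_r. repeat split; try lra.
      apply Rdiv_lt_0_compat; lra.
    + rewrite Rmult_0_r, exp_0, !Rmult_1_r. unfold slope. field. nra.
Qed.

End HalfLine.

(** * Explicit profiles and their integrals *)

Definition exp_profile (m A x : R) : R := A * exp (m * x).

Definition sinh_of_tanh4 (w : R) : R := 4 * w * (1 + w ^ 2) / (1 - w ^ 2) ^ 2.

Definition slope_sq_primitive (m w : R) : R := 8 * m / (1 - w ^ 2).

Lemma sinh_tanh4 y : sinh y = sinh_of_tanh4 (tanh4 y).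
Proof.
  unfold sinh, sinh_of_tanh4, tanh4. rewrite exp_Ropp, <- (exp_half_sq y).
  assert (HE := exp_pos (y / 2)). set (E := exp (y / 2)) in *.
  field. replace ((E + 1) ^ 2 - (E - 1) ^ 2) with (4 * E) by ring. repeat split; lra.
Qed.

Lemma slope_opp m w : slope (- m) w = - slope m w.
Proof. unfold slope, Rdiv. ring. Qed.

Lemma slope_0 m : slope m 0 = 0.
Proof. unfold slope, Rdiv. ring. Qed.

Lemma exp_profile_0 m A : exp_profile m A 0 = A.
Proof. unfold exp_profile. rewrite Rmult_0_r, exp_0. ring. Qed.

Lemma one_minus_sq_pos w : Rabs w < 1 -> 0 < 1 - w ^ 2.
Proof. intro H. apply Rabs_def2 in H. nra. Qed.

Lemma Rabs_exp_profile_lt_1 m A x :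
  Rabs A < 1 -> m * x <= 0 -> Rabs (exp_profile m A x) < 1.
Proof.
  intros HA Hx. unfold exp_profile.
  rewrite Rabs_mult, (Rabs_right (exp _)) by (left; apply exp_pos).
  assert (H1 := exp_le_1 _ Hx). assert (H2 := exp_pos (m * x)). assert (H3 := Rabs_pos A).
  nra.
Qed.

Section ProfileIntegrals.

Variables (m A p q : R).
Hypothesis A_small : Rabs A < 1.
Hypothesis profile_decays : forall x, Rmin p q <= x <= Rmax p q -> m * x <= 0.

Let profile_gap x (Hx : Rmin p q <= x <= Rmax p q) : 0 < 1 - exp_profile m A x ^ 2 :=
  one_minus_sq_pos _ (Rabs_exp_profile_lt_1 m A x A_small (profile_decays x Hx)).

Lemma is_RInt_sinh_of_profile :
  RInt.is_RInt (fun x => m ^ 2 * sinh_of_tanh4 (exp_profile m A x)) p q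
    (slope m (exp_profile m A q) - slope m (exp_profile m A p)).
Proof.
  apply (is_RInt_derive (fun x => slope m (exp_profile m A x))).
  - intros x Hx. assert (H := profile_gap x Hx).
    unfold slope, sinh_of_tanh4, exp_profile in *. auto_derive; [nra|field; nra].
  - intros x Hx. assert (H := profile_gap x Hx).
    apply (ex_derive_continuous (K := R_AbsRing) (V := R_NormedModule)).
    unfold sinh_of_tanh4, exp_profile in *. auto_derive. nra.
Qed.

Lemma is_RInt_slope_sq_of_profile :
  RInt.is_RInt (fun x => slope m (exp_profile m A x) ^ 2) p q
    (slope_sq_primitive m (exp_profile m A q) - slope_sq_primitive m (exp_profile m A p)).
Proof.
  apply (is_RInt_derive (fun x => slope_sq_primitive m (exp_profile m A x))).
  - intros x Hx. assert (H := profile_gap x Hx).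
    unfold slope, slope_sq_primitive, exp_profile in *. auto_derive; [nra|field; nra].
  - intros x Hx. assert (H := profile_gap x Hx).
    apply (ex_derive_continuous (K := R_AbsRing) (V := R_NormedModule)).
    unfold slope, exp_profile in *. auto_derive. nra.
Qed.

End ProfileIntegrals.

Lemma is_RInt_ext_R (f g : R -> R) p q I :
  (forall x, Rmin p q < x < Rmax p q -> f x = g x) ->
  RInt.is_RInt f p q I -> RInt.is_RInt g p q I.
Proof. apply is_RInt_ext. Qed.

Lemma is_RInt_scal_primitive (f P : R -> R) c p q :
  RInt.is_RInt f p q (P q - P p) -> RInt.is_RInt (fun x => c * f x) p q (c * P q - c * P p).
Proof.
  intro H. replace (c * P q - c * P p) with (c * (P q - P p)) by ring.
  exact (is_RInt_scal f p q c _ H).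
Qed.

Lemma improper_0_pinf_of_primitive (f P : R -> R) L :
  (forall b, 0 < b -> RInt.is_RInt f 0 b (P b - P 0)) -> lim_pinf P L ->
  improper_0_pinf f (L - P 0).
Proof.
  intros HI HL. exists (fun b => P b - P 0). split.
  - intros b Hb. apply is_RInt_Riemann, HI, Hb.
  - intros eps Heps. destruct (HL eps Heps) as [M HM]. exists M. intros x Hx.
    replace (P x - P 0 - (L - P 0)) with (P x - L) by ring. apply HM, Hx.
Qed.

Lemma improper_minf_0_of_primitive (f P : R -> R) L :
  (forall a, a < 0 -> RInt.is_RInt f a 0 (P 0 - P a)) -> lim_minf P L ->
  improper_minf_0 f (P 0 - L).
Proof.
  intros HI HL. exists (fun a => P 0 - P a). split.
  - intros a Ha. apply is_RInt_Riemann, HI, Ha.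
  - intros eps Heps. destruct (HL eps Heps) as [M HM]. exists M. intros x Hx.
    replace (P 0 - P x - (P 0 - L)) with (- (P x - L)) by ring.
    rewrite Rabs_Ropp. apply HM, Hx.
Qed.

Lemma lim_pinf_of_profile (F : R -> R) m A :
  m < 0 -> continuity_pt F 0 -> lim_pinf (fun x => F (exp_profile m A x)) (F 0).
Proof.
  intros Hm HF. apply (lim_pinf_continuous_comp (exp_profile m A) F 0); [|exact HF].
  apply lim_pinf_exp_decay, Hm.
Qed.

Lemma lim_minf_of_profile (F : R -> R) m A :
  0 < m -> continuity_pt F 0 -> lim_minf (fun x => F (exp_profile m A x)) (F 0).
Proof.
  intros Hm HF. apply lim_minf_of_opp.
  apply (lim_pinf_continuous_comp (fun x => exp_profile m A (- x)) F 0); [|exact HF].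
  intros eps Heps. destruct (lim_pinf_exp_decay A (- m) ltac:(lra) eps Heps) as [M HM].
  exists M. intros x Hx. unfold exp_profile. replace (m * - x) with (- m * x) by ring.
  apply HM, Hx.
Qed.

Lemma slope_continuous c m : continuity_pt (fun w => c * slope m w) 0.
Proof.
  apply derivable_continuous_pt, ex_derive_Reals_0. unfold slope. auto_derive. lra.
Qed.

Lemma slope_sq_primitive_continuous c m :
  continuity_pt (fun w => c * slope_sq_primitive m w) 0.
Proof.
  apply derivable_continuous_pt, ex_derive_Reals_0. unfold slope_sq_primitive.
  auto_derive. lra.
Qed.

(** * Interface conditions *)

Lemma partition_term c a :
  0 <= c -> - 2 * c * sinh a + sqrt (4 * c ^ 2 + (- 2 * c * sinh a) ^ 2) = 2 * c * exp (- a).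
Proof.
  intro Hc.
  assert (Hcosh : sqrt (4 * c ^ 2 + (- 2 * c * sinh a) ^ 2) = c * (exp a + exp (- a))).
  { assert (Hp := exp_pos a). assert (Hm := exp_pos (- a)).
    apply sqrt_lem_1; [nra|nra|].
    assert (H : exp a * exp (- a) = 1) by (rewrite exp_Ropp; field; apply exp_neq_0).
    unfold sinh. nra. }
  rewrite Hcosh. unfold sinh. field.
Qed.

Lemma sinh_half_relation_signs z a b : 0 < z -> sinh (b / 2) = - z * sinh (a / 2) ->
  (0 <= a /\ b <= 0) \/ (a <= 0 /\ 0 <= b).
Proof.
  intros Hz Hs.
  assert (Hpos : forall u, 0 < u -> 0 < sinh u) by (intros u Hu; rewrite <- sinh_0; apply sinh_lt, Hu).
  assert (Hneg : forall u, u < 0 -> sinh u < 0) by (intros u Hu; rewrite <- sinh_0; apply sinh_lt, Hu).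
  destruct (Rtotal_order a 0) as [Ha|[Ha|Ha]].
  - right. split; [lra|]. apply Rnot_lt_le. intro Hb.
    assert (H1 := Hneg (b / 2) ltac:(lra)). assert (H2 := Hneg (a / 2) ltac:(lra)). nra.
  - subst a. replace (0 / 2) with 0 in Hs by field. rewrite sinh_0, Rmult_0_r in Hs.
    destruct (Rtotal_order b 0) as [Hb|[Hb|Hb]].
    + assert (H := Hneg (b / 2) ltac:(lra)). lra.
    + left. lra.
    + assert (H := Hpos (b / 2) ltac:(lra)). lra.
  - left. split; [lra|]. apply Rnot_lt_le. intro Hb.
    assert (H1 := Hpos (b / 2) ltac:(lra)). assert (H2 := Hpos (a / 2) ltac:(lra)). nra.
Qed.

Lemma sinh_sub_id_le u : Rabs u <= / 2 -> Rabs (sinh u - u) <= u ^ 2.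
Proof.
  intro Hu. apply Rabs_le_between in Hu. destruct Hu as [Hu1 Hu2].
  assert (H1 := exp_ineq1_le u). assert (H2 := exp_ineq1_le (- u)).
  assert (HPQ : exp u * exp (- u) = 1) by (rewrite exp_Ropp; field; apply exp_neq_0).
  assert (HP := exp_pos u). assert (HQ := exp_pos (- u)).
  (* the lower bounds [exp (+-u) >= 1 +- u] turn into upper bounds through [exp u * exp (- u) = 1] *)
  assert (B1 : exp u <= 1 + u + 2 * u ^ 2).
  { assert (exp u * (1 - u) <= 1) by nra.
    assert ((1 - u) * (1 + u + 2 * u ^ 2) >= 1) by nra. nra. }
  assert (B2 : exp (- u) <= 1 - u + 2 * u ^ 2).
  { assert (exp (- u) * (1 + u) <= 1) by nra.
    assert ((1 + u) * (1 - u + 2 * u ^ 2) >= 1) by nra. nra. }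
  unfold sinh. apply Rabs_le. split; nra.
Qed.

Lemma split_linearization z a b : 0 < z -> sinh (b / 2) = - z * sinh (a / 2) ->
  Rabs (a - b) < 1 ->
  Rabs (b + z * a) <= (1 + z) * (a - b) ^ 2 / 2 /\
  Rabs (2 * sinh (b / 2) - b) <= (a - b) ^ 2 / 2.
Proof.
  intros Hz Hs Hab.
  assert (Hsg := sinh_half_relation_signs z a b Hz Hs).
  set (s := a / 2) in *. set (t := b / 2) in *.
  replace a with (2 * s) in * by (unfold s; field).
  replace b with (2 * t) in * by (unfold t; field).
  apply Rabs_def2 in Hab.
  assert (Hs2 : s ^ 2 <= (s - t) ^ 2) by (destruct Hsg; nra).
  assert (Ht2 : t ^ 2 <= (s - t) ^ 2) by (destruct Hsg; nra).
  assert (Bs := sinh_sub_id_le s ltac:(apply Rabs_le; destruct Hsg; lra)).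
  assert (Bt := sinh_sub_id_le t ltac:(apply Rabs_le; destruct Hsg; lra)).
  apply Rabs_le_between in Bs. apply Rabs_le_between in Bt.
  assert (HK : 2 * t + z * (2 * s) = - 2 * ((sinh t - t) + z * (sinh s - s))) by (rewrite Hs; ring).
  split; apply Rabs_le; rewrite ?HK; split; nra.
Qed.

Lemma Rle_mul_sq_weaken x c c' y : x <= c * y ^ 2 -> c <= c' -> x <= c' * y ^ 2.
Proof. intros H Hc. assert (Hy := pow2_ge_0 y). nra. Qed.

Section SplitLinearization.

Variables z a b : R.
Hypothesis z_pos : 0 < z.
Hypothesis sinh_relation : sinh (b / 2) = - z * sinh (a / 2).
Hypothesis small : Rabs (a - b) < 1.

Lemma split_interior_linear : Rabs (- b - z / (1 + z) * (a - b)) <= / 2 * (a - b) ^ 2.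
Proof.
  destruct (split_linearization z a b z_pos sinh_relation small) as [H _].
  replace (- b - z / (1 + z) * (a - b)) with (- (b + z * a) / (1 + z)) by (field; lra).
  unfold Rdiv. rewrite Rabs_mult, Rabs_Ropp, Rabs_inv, (Rabs_right (1 + z)) by lra.
  apply Rmult_le_reg_r with (1 + z); [lra|].
  rewrite Rmult_assoc, Rinv_l by lra. lra.
Qed.

Lemma split_exterior_linear : Rabs (a - 1 / (1 + z) * (a - b)) <= / 2 * (a - b) ^ 2.
Proof.
  replace (a - 1 / (1 + z) * (a - b)) with (- (- b - z / (1 + z) * (a - b))) by (field; lra).
  rewrite Rabs_Ropp. apply split_interior_linear.
Qed.

Lemma split_charge_linear al : 0 < al ->
  Rabs (- al * (2 * sinh (b / 2)) - al * z / (1 + z) * (a - b)) <= al * (a - b) ^ 2.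
Proof.
  intro Hal. destruct (split_linearization z a b z_pos sinh_relation small) as [_ H].
  replace (- al * (2 * sinh (b / 2)) - al * z / (1 + z) * (a - b))
    with (- al * ((2 * sinh (b / 2) - b) + - (- b - z / (1 + z) * (a - b)))) by (field; lra).
  rewrite Rabs_mult, Rabs_Ropp, (Rabs_right al) by lra.
  assert (Htri := Rabs_triang (2 * sinh (b / 2) - b) (- (- b - z / (1 + z) * (a - b)))).
  rewrite Rabs_Ropp in Htri. assert (Hi := split_interior_linear). nra.
Qed.

End SplitLinearization.

Section InterfaceAlgebra.

Variables (r z a b : R).
Hypothesis r_pos : 0 < r.
Hypothesis z_pos : 0 < z.
Hypothesis exp_ratio : exp (a / 2) = r * exp (b / 2).
Hypothesis flux_ratio : exp (b / 2) - / exp (b / 2) = - z * (exp (a / 2) - / exp (a / 2)).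

Lemma interface_exp_sq : exp (b / 2) ^ 2 * (r * (1 + r * z)) = r + z.
Proof.
  assert (HY := exp_pos (b / 2)). set (Y := exp (b / 2)) in *.
  rewrite exp_ratio in flux_ratio.
  apply (Rmult_eq_compat_r (r * Y)) in flux_ratio.
  field_simplify in flux_ratio; [nra|lra|nra].
Qed.

Lemma A_m_tanh4 : A_m r z = tanh4 b.
Proof.
  assert (HY := exp_pos (b / 2)).
  assert (Hq : 0 < r * (1 + r * z)) by nra.
  assert (Hs := sqrt_lt_R0 _ Hq). assert (Hss := sqrt_sqrt _ (Rlt_le _ _ Hq)).
  assert (E : sqrt (r + z) = exp (b / 2) * sqrt (r * (1 + r * z))).
  { apply sqrt_lem_1; [lra|nra|]. rewrite <- interface_exp_sq.
    transitivity (exp (b / 2) ^ 2 * (sqrt (r * (1 + r * z)) * sqrt (r * (1 + r * z))));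
      [ring|rewrite Hss; ring]. }
  unfold A_m, tanh4. rewrite E. field. split; nra.
Qed.

Lemma A_p_tanh4 : A_p r z = tanh4 a.
Proof.
  assert (HY := exp_pos (b / 2)). assert (HX := exp_pos (a / 2)).
  assert (Hq : 0 < 1 + r * z) by nra.
  assert (Hs := sqrt_lt_R0 _ Hq). assert (Hss := sqrt_sqrt _ (Rlt_le _ _ Hq)).
  assert (E : sqrt (r * (r + z)) = exp (a / 2) * sqrt (1 + r * z)).
  { apply sqrt_lem_1; [nra|nra|].
    rewrite <- interface_exp_sq, exp_ratio.
    transitivity (r ^ 2 * exp (b / 2) ^ 2 * (sqrt (1 + r * z) * sqrt (1 + r * z)));
      [ring|rewrite Hss; ring]. }
  unfold A_p, tanh4. rewrite E. field. split; nra.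
Qed.

End InterfaceAlgebra.

(** * The two-sided solution *)

Section Constants.

Variables eps_i eps_e S_i : R.
Hypotheses (eps_i_pos : 0 < eps_i) (eps_e_pos : 0 < eps_e) (S_i_pos : 0 < S_i).

Lemma lam_p_pos : 0 < lam_p eps_e.
Proof. apply Rdiv_lt_0_compat; apply sqrt_lt_R0; lra. Qed.

Lemma lam_m_pos : 0 < lam_m eps_i S_i.
Proof.
  apply Rmult_lt_0_compat; [apply Rdiv_lt_0_compat|]; repeat apply sqrt_lt_R0; lra.
Qed.

Lemma eps_lam_p_sq : eps_e * lam_p eps_e ^ 2 = 2.
Proof.
  unfold lam_p. assert (He := sqrt_lt_R0 _ eps_e_pos).
  unfold Rdiv. rewrite Rpow_mult_distr, pow_inv, !pow2_sqrt by lra. field. lra.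
Qed.

Lemma eps_lam_m_sq : eps_i * lam_m eps_i S_i ^ 2 = 2 * sqrt S_i.
Proof.
  unfold lam_m. assert (Hi := sqrt_lt_R0 _ eps_i_pos). assert (HS := sqrt_lt_R0 _ S_i_pos).
  unfold Rdiv. rewrite !Rpow_mult_distr, pow_inv, !pow2_sqrt by lra. field. lra.
Qed.

Lemma zeta_sqrt : zeta eps_i eps_e S_i = sqrt eps_e / (sqrt eps_i * sqrt (sqrt S_i)).
Proof.
  assert (He := sqrt_lt_R0 _ eps_e_pos). assert (Hi := sqrt_lt_R0 _ eps_i_pos).
  assert (HS := sqrt_lt_R0 _ S_i_pos). assert (HS2 := sqrt_lt_R0 _ HS).
  unfold zeta. apply sqrt_lem_1.
  - left. apply Rdiv_lt_0_compat; [lra|]. apply Rmult_lt_0_compat; lra.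
  - left. apply Rdiv_lt_0_compat; [lra|]. apply Rmult_lt_0_compat; lra.
  - assert (Ee := sqrt_sqrt eps_e ltac:(lra)). assert (Ei := sqrt_sqrt eps_i ltac:(lra)).
    assert (ES := sqrt_sqrt (sqrt S_i) ltac:(lra)).
    set (se := sqrt eps_e) in *. set (si := sqrt eps_i) in *. set (q := sqrt (sqrt S_i)) in *.
    rewrite <- Ee, <- Ei, <- ES. field. lra.
Qed.

Lemma zeta_pos : 0 < zeta eps_i eps_e S_i.
Proof.
  apply sqrt_lt_R0, Rdiv_lt_0_compat; [lra|].
  apply Rmult_lt_0_compat; [lra|apply sqrt_lt_R0; lra].
Qed.

Lemma eps_lam_p_zeta :
  eps_e * lam_p eps_e = zeta eps_i eps_e S_i * (eps_i * lam_m eps_i S_i).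
Proof.
  assert (He := sqrt_lt_R0 _ eps_e_pos). assert (Hi := sqrt_lt_R0 _ eps_i_pos).
  assert (HS2 := sqrt_lt_R0 _ (sqrt_lt_R0 _ S_i_pos)).
  assert (Ee := sqrt_sqrt eps_e ltac:(lra)). assert (Ei := sqrt_sqrt eps_i ltac:(lra)).
  rewrite zeta_sqrt. unfold lam_p, lam_m.
  set (se := sqrt eps_e) in *. set (si := sqrt eps_i) in *.
  rewrite <- Ee at 1. rewrite <- Ei at 1. field. lra.
Qed.

End Constants.

Section Solution.

Variables (eps_i eps_e S_i l_C phim phip : R) (phit d1 d2 : R -> R).
(* [sol] comes first so that [eapply lemma; eassumption] instantiates every variable from it. *)
Hypothesis sol : IsSolution eps_i eps_e S_i l_C phim phip phit d1 d2.
Hypotheses (eps_i_pos : 0 < eps_i) (eps_e_pos : 0 < eps_e) (S_i_pos : 0 < S_i).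
Hypothesis l_C_pos : 0 < l_C.

Let kp := lam_p eps_e.
Let km := lam_m eps_i S_i.
Let z := zeta eps_i eps_e S_i.
Let r := rho S_i l_C.
Let a := phit 0 - phip.
Let b := phit 0 - phim.

Lemma exterior_half_line :
  (forall x, 0 < x ->
     tanh4 (phit x - phip) = tanh4 a * exp (- kp * x) /\
     d1 x = slope (- kp) (tanh4 (phit x - phip))) /\
  (forall Dp, rderiv phit 0 Dp -> Dp = slope (- kp) (tanh4 a)).
Proof.
  destruct sol as [Hcont [Hder [Hode [_ [Hlim _]]]]].
  set (f := fun x => phit x - phip).
  assert (Hf : forall x, 0 < x -> derivable_pt_lim f x (d1 x))
    by (intros x Hx; apply derivable_pt_lim_sub_const, (Hder x ltac:(lra))).
  assert (Hg : forall x, 0 < x -> derivable_pt_lim d1 x (d2 x)) by (intros x Hx; apply (Hder x ltac:(lra))).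
  assert (Hh : forall x, 0 < x -> d2 x = kp ^ 2 * sinh (f x)).
  { intros x Hx. assert (H := Hode x ltac:(lra)).
    unfold epsfun, Sfun, phipm in H. destruct (Rlt_dec x 0); [lra|]. rewrite sqrt_1, Rmult_1_r in H.
    apply Rmult_eq_reg_l with eps_e; [|lra].
    rewrite H, <- Rmult_assoc, eps_lam_p_sq by lra. reflexivity. }
  assert (Hl : lim_pinf f 0).
  { intros eps Heps. destruct (Hlim eps Heps) as [M HM]. exists M. intros x Hx.
    unfold f. rewrite Rminus_0_r. apply HM, Hx. }
  assert (Hc : continuity_pt f 0)
    by (apply continuity_pt_minus; [apply Hcont|apply continuity_pt_const; intros u v; reflexivity]).
  split.
  - exact (half_line_profile kp f d1 d2 (lam_p_pos eps_e eps_e_pos) Hf Hg Hh Hl Hc).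
  - intros Dp HDp. apply (half_line_rderiv kp Dp f d1 d2 (lam_p_pos eps_e eps_e_pos) Hf Hg Hh Hl Hc).
    intros eps Heps. destruct (HDp eps Heps) as [del [Hdel Hd]]. exists del. split; [exact Hdel|].
    intros h Hh0. unfold f.
    replace ((phit (0 + h) - phip - (phit 0 - phip)) / h) with ((phit (0 + h) - phit 0) / h)
      by (field; lra).
    apply Hd, Hh0.
Qed.

Lemma interior_half_line :
  (forall x, x < 0 ->
     tanh4 (phit x - phim) = tanh4 b * exp (km * x) /\
     d1 x = slope km (tanh4 (phit x - phim))) /\
  (forall Dm, lderiv phit 0 Dm -> Dm = slope km (tanh4 b)).
Proof.
  destruct sol as [Hcont [Hder [Hode [Hlim _]]]].
  set (f := fun x => phit (- x) - phim).
  set (g := fun x => - d1 (- x)).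
  assert (Hf : forall x, 0 < x -> derivable_pt_lim f x (g x)).
  { intros x Hx. apply (derivable_pt_lim_sub_const (fun y => phit (- y))).
    apply derivable_pt_lim_reflect, (Hder (- x) ltac:(lra)). }
  assert (Hg : forall x, 0 < x -> derivable_pt_lim g x (d2 (- x))).
  { intros x Hx. rewrite <- (Ropp_involutive (d2 (- x))).
    apply (derivable_pt_lim_opp (fun y => d1 (- y))).
    apply derivable_pt_lim_reflect, (Hder (- x) ltac:(lra)). }
  assert (Hh : forall x, 0 < x -> d2 (- x) = km ^ 2 * sinh (f x)).
  { intros x Hx. assert (H := Hode (- x) ltac:(lra)).
    unfold epsfun, Sfun, phipm in H. destruct (Rlt_dec (- x) 0); [|lra].
    apply Rmult_eq_reg_l with eps_i; [|lra].
    rewrite H, <- Rmult_assoc. unfold km. rewrite eps_lam_m_sq by lra. reflexivity. }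
  assert (Hl : lim_pinf f 0).
  { intros eps Heps. destruct (Hlim eps Heps) as [M HM]. exists (- M). intros x Hx.
    unfold f. rewrite Rminus_0_r. apply HM. lra. }
  assert (Hc := continuity_pt_reflect_sub phit phim (Hcont 0)).
  assert (Hkm := lam_m_pos eps_i S_i eps_i_pos S_i_pos).
  assert (Hf0 : f 0 = b) by (unfold f; rewrite Ropp_0; reflexivity).
  split.
  - intros x Hx.
    destruct (half_line_profile km f g (fun x => d2 (- x)) Hkm Hf Hg Hh Hl Hc (- x) ltac:(lra))
      as [H1 H2].
    rewrite Hf0 in H1. unfold f, g in H1, H2. rewrite Ropp_involutive in H1, H2.
    split.
    + rewrite H1. do 2 f_equal. ring.
    + rewrite slope_opp in H2. lra.
  - intros Dm HDm.
    assert (H := half_line_rderiv km (- Dm) f g (fun x => d2 (- x)) Hkm Hf Hg Hh Hl Hc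
                   (rderiv_reflect phit phim Dm HDm)).
    rewrite Hf0, slope_opp in H. lra.
Qed.

Lemma interface_flux : exp (b / 2) - / exp (b / 2) = - z * (exp (a / 2) - / exp (a / 2)).
Proof.
  destruct sol as [_ [_ [_ [_ [_ [[Dm [Dp [HDm [HDp Hflux]]]] _]]]]]].
  rewrite (proj2 interior_half_line Dm HDm), slope_tanh4 in Hflux.
  rewrite (proj2 exterior_half_line Dp HDp), slope_tanh4 in Hflux.
  assert (Hk : 0 < eps_i * km)
    by (apply Rmult_lt_0_compat; [lra|apply lam_m_pos; lra]).
  apply Rmult_eq_reg_l with (eps_i * km); [|lra].
  rewrite Rmult_assoc, Hflux.
  transitivity (- (eps_e * kp) * (exp (a / 2) - / exp (a / 2))); [ring|].
  unfold kp, km, z. rewrite (eps_lam_p_zeta eps_i eps_e S_i) by lra. ring.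
Qed.

Lemma interface_partition : l_C * exp b = sqrt S_i * exp a.
Proof.
  destruct sol as [_ [_ [_ [_ [_ [_ Hpart]]]]]]. cbv zeta in Hpart.
  assert (HS := sqrt_lt_R0 _ S_i_pos).
  (* both sides have the shape of [partition_term], with [c = 1] and [c = sqrt S_i] *)
  replace (- 2 * sinh (phit 0 - phip)) with (- 2 * 1 * sinh a) in Hpart by (unfold a; ring).
  replace 4 with (4 * 1 ^ 2) in Hpart at 1 by ring.
  replace (4 * S_i) with (4 * sqrt S_i ^ 2) in Hpart by (rewrite pow2_sqrt; lra).
  rewrite partition_term, (partition_term (sqrt S_i)) in Hpart by lra.
  rewrite !exp_Ropp in Hpart. fold b in Hpart.
  assert (Ha := exp_pos a). assert (Hb := exp_pos b).
  apply Rmult_eq_reg_r with (2 / (exp a * exp b)).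
  - transitivity (l_C * (2 * 1 * / exp a)); [field; lra|].
    rewrite Hpart. field. lra.
  - apply Rgt_not_eq, Rdiv_lt_0_compat; [lra|nra].
Qed.

Lemma galvani_potential : phim - phip = ln (l_C / sqrt S_i).
Proof.
  assert (HS := sqrt_lt_R0 _ S_i_pos).
  replace (l_C / sqrt S_i) with (exp a / exp b).
  - unfold Rdiv. rewrite <- exp_Ropp, <- exp_plus, ln_exp. unfold a, b. ring.
  - assert (Hb := exp_pos b). apply Rmult_eq_reg_r with (sqrt S_i * exp b); [|nra].
    transitivity (sqrt S_i * exp a); [field; lra|].
    rewrite <- interface_partition. field. lra.
Qed.

Lemma rho_pos : 0 < r.
Proof. apply sqrt_lt_R0, Rdiv_lt_0_compat; [lra|apply sqrt_lt_R0, S_i_pos]. Qed.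

Lemma exp_half_ratio : exp (a / 2) = r * exp (b / 2).
Proof.
  assert (HS := sqrt_lt_R0 _ S_i_pos). assert (Hr := rho_pos).
  assert (Hq : 0 < l_C / sqrt S_i) by (apply Rdiv_lt_0_compat; lra).
  assert (HX := exp_pos (a / 2)). assert (HY := exp_pos (b / 2)).
  apply Rsqr_inj; [lra|left; apply Rmult_lt_0_compat; lra|].
  unfold Rsqr, r, rho.
  transitivity ((sqrt (l_C / sqrt S_i) * sqrt (l_C / sqrt S_i)) * (exp (b / 2) * exp (b / 2)));
    [|ring].
  rewrite sqrt_sqrt, !exp_half_sq by lra.
  apply Rmult_eq_reg_l with (sqrt S_i); [|lra].
  transitivity (l_C * exp b); [symmetry; apply interface_partition|field; lra].
Qed.

Lemma A_p_solution : A_p r z = tanh4 a.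
Proof.
  apply A_p_tanh4 with b.
  - exact rho_pos.
  - apply zeta_pos; lra.
  - exact exp_half_ratio.
  - exact interface_flux.
Qed.

Lemma A_m_solution : A_m r z = tanh4 b.
Proof.
  apply A_m_tanh4 with a.
  - exact rho_pos.
  - apply zeta_pos; lra.
  - exact exp_half_ratio.
  - exact interface_flux.
Qed.

Lemma sinh_half_relation : sinh (b / 2) = - z * sinh (a / 2).
Proof.
  unfold sinh. rewrite !exp_Ropp, interface_flux. field. apply exp_neq_0.
Qed.

Lemma exterior_potential x : 0 < x ->
  phit x = phip + 2 * ln ((1 + A_p r z * exp (- kp * x)) / (1 - A_p r z * exp (- kp * x))).
Proof.
  intro Hx. rewrite A_p_solution, <- (proj1 (proj1 exterior_half_line x Hx)), ln_tanh4. ring.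
Qed.

Lemma interior_potential x : x < 0 ->
  phit x = phim + 2 * ln ((1 + A_m r z * exp (km * x)) / (1 - A_m r z * exp (km * x))).
Proof.
  intro Hx. rewrite A_m_solution, <- (proj1 (proj1 interior_half_line x Hx)), ln_tanh4. ring.
Qed.

Lemma exterior_charge :
  improper_0_pinf (qt S_i phim phip phit) (eps_e * slope (- kp) (tanh4 a)).
Proof.
  set (w := exp_profile (- kp) (tanh4 a)).
  assert (Hkp : 0 < kp) by apply lam_p_pos, eps_e_pos.
  replace (eps_e * slope (- kp) (tanh4 a))
    with (- eps_e * slope (- kp) 0 - - eps_e * slope (- kp) (w 0))
    by (unfold w; rewrite exp_profile_0, slope_0; ring).
  apply (improper_0_pinf_of_primitive _ (fun x => - eps_e * slope (- kp) (w x))).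
  - intros t Ht. apply is_RInt_ext_R with (fun x => - eps_e * ((- kp) ^ 2 * sinh_of_tanh4 (w x))).
    + intros x Hx. rewrite Rmin_left, Rmax_right in Hx by lra.
      unfold qt, Sfun, phipm. destruct (Rlt_dec x 0); [lra|].
      rewrite sqrt_1, sinh_tanh4, (proj1 (proj1 exterior_half_line x ltac:(lra))).
      transitivity (- (eps_e * kp ^ 2) * sinh_of_tanh4 (w x)); [unfold w, exp_profile; ring|].
      unfold w, exp_profile, kp. rewrite eps_lam_p_sq by lra. ring.
    + apply (is_RInt_scal_primitive _ (fun x => slope (- kp) (w x))).
      apply is_RInt_sinh_of_profile; [apply Rabs_tanh4_lt_1|].
      intros x Hx. rewrite Rmin_left, Rmax_right in Hx by lra. nra.
  - apply (lim_pinf_of_profile (fun v => - eps_e * slope (- kp) v)); [lra|apply slope_continuous].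
Qed.

Lemma interior_charge :
  improper_minf_0 (qt S_i phim phip phit) (- eps_i * slope km (tanh4 b)).
Proof.
  set (w := exp_profile km (tanh4 b)).
  assert (Hkm : 0 < km) by (apply lam_m_pos; assumption).
  replace (- eps_i * slope km (tanh4 b))
    with (- eps_i * slope km (w 0) - - eps_i * slope km 0)
    by (unfold w; rewrite exp_profile_0, slope_0; ring).
  apply (improper_minf_0_of_primitive _ (fun x => - eps_i * slope km (w x))).
  - intros t Ht. apply is_RInt_ext_R with (fun x => - eps_i * (km ^ 2 * sinh_of_tanh4 (w x))).
    + intros x Hx. rewrite Rmin_left, Rmax_right in Hx by lra.
      unfold qt, Sfun, phipm. destruct (Rlt_dec x 0); [|lra].
      rewrite sinh_tanh4, (proj1 (proj1 interior_half_line x ltac:(lra))).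
      transitivity (- (eps_i * km ^ 2) * sinh_of_tanh4 (w x)); [unfold w, exp_profile; ring|].
      unfold w, exp_profile, km. rewrite eps_lam_m_sq by lra. ring.
    + apply (is_RInt_scal_primitive _ (fun x => slope km (w x))).
      apply is_RInt_sinh_of_profile; [apply Rabs_tanh4_lt_1|].
      intros x Hx. rewrite Rmin_left, Rmax_right in Hx by lra. nra.
  - apply (lim_minf_of_profile (fun v => - eps_i * slope km v)); [lra|apply slope_continuous].
Qed.

Lemma charge_balance : - eps_i * slope km (tanh4 b) = - (eps_e * slope (- kp) (tanh4 a)).
Proof.
  rewrite !slope_tanh4, interface_flux.
  transitivity (z * (eps_i * km) * (exp (a / 2) - / exp (a / 2))); [ring|].
  unfold z, km, kp. rewrite <- eps_lam_p_zeta by lra. ring.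
Qed.

Lemma exterior_energy :
  improper_0_pinf (fun x => epsfun eps_i eps_e x * d1 x ^ 2)
    (8 * kp * eps_e * tanh4 a ^ 2 / (1 - tanh4 a ^ 2)).
Proof.
  set (w := exp_profile (- kp) (tanh4 a)).
  assert (Hkp : 0 < kp) by apply lam_p_pos, eps_e_pos.
  assert (Ha := one_minus_sq_pos _ (Rabs_tanh4_lt_1 a)).
  replace (8 * kp * eps_e * tanh4 a ^ 2 / (1 - tanh4 a ^ 2))
    with (eps_e * slope_sq_primitive (- kp) 0 - eps_e * slope_sq_primitive (- kp) (w 0))
    by (unfold w, slope_sq_primitive; rewrite exp_profile_0; field; lra).
  apply (improper_0_pinf_of_primitive _ (fun x => eps_e * slope_sq_primitive (- kp) (w x))).
  - intros t Ht. apply is_RInt_ext_R with (fun x => eps_e * slope (- kp) (w x) ^ 2).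
    + intros x Hx. rewrite Rmin_left, Rmax_right in Hx by lra.
      unfold epsfun. destruct (Rlt_dec x 0); [lra|].
      destruct (proj1 exterior_half_line x ltac:(lra)) as [Hw Hd]. rewrite Hd, Hw. reflexivity.
    + apply (is_RInt_scal_primitive _ (fun x => slope_sq_primitive (- kp) (w x))).
      apply is_RInt_slope_sq_of_profile; [apply Rabs_tanh4_lt_1|].
      intros x Hx. rewrite Rmin_left, Rmax_right in Hx by lra. nra.
  - apply (lim_pinf_of_profile (fun v => eps_e * slope_sq_primitive (- kp) v));
      [lra|apply slope_sq_primitive_continuous].
Qed.

Lemma interior_energy :
  improper_minf_0 (fun x => epsfun eps_i eps_e x * d1 x ^ 2)
    (8 * km * eps_i * tanh4 b ^ 2 / (1 - tanh4 b ^ 2)).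
Proof.
  set (w := exp_profile km (tanh4 b)).
  assert (Hkm : 0 < km) by (apply lam_m_pos; assumption).
  assert (Hb := one_minus_sq_pos _ (Rabs_tanh4_lt_1 b)).
  replace (8 * km * eps_i * tanh4 b ^ 2 / (1 - tanh4 b ^ 2))
    with (eps_i * slope_sq_primitive km (w 0) - eps_i * slope_sq_primitive km 0)
    by (unfold w, slope_sq_primitive; rewrite exp_profile_0; field; lra).
  apply (improper_minf_0_of_primitive _ (fun x => eps_i * slope_sq_primitive km (w x))).
  - intros t Ht. apply is_RInt_ext_R with (fun x => eps_i * slope km (w x) ^ 2).
    + intros x Hx. rewrite Rmin_left, Rmax_right in Hx by lra.
      unfold epsfun. destruct (Rlt_dec x 0); [|lra].
      destruct (proj1 interior_half_line x ltac:(lra)) as [Hw Hd]. rewrite Hd, Hw. reflexivity.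
    + apply (is_RInt_scal_primitive _ (fun x => slope_sq_primitive km (w x))).
      apply is_RInt_slope_sq_of_profile; [apply Rabs_tanh4_lt_1|].
      intros x Hx. rewrite Rmin_left, Rmax_right in Hx by lra. nra.
  - apply (lim_minf_of_profile (fun v => eps_i * slope_sq_primitive km v));
      [lra|apply slope_sq_primitive_continuous].
Qed.

Lemma interior_drop : phim - phit 0 = - 2 * ln ((1 + A_m r z) / (1 - A_m r z)).
Proof. rewrite A_m_solution. assert (H := ln_tanh4 b). unfold b in *. lra. Qed.

Lemma exterior_drop : phit 0 - phip = 2 * ln ((1 + A_p r z) / (1 - A_p r z)).
Proof. rewrite A_p_solution, ln_tanh4. reflexivity. Qed.

Lemma drops_same_sign :
  (0 <= phim - phit 0 /\ 0 <= phit 0 - phip) \/ (phim - phit 0 <= 0 /\ phit 0 - phip <= 0).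
Proof.
  destruct (sinh_half_relation_signs z a b (zeta_pos _ _ _ eps_i_pos eps_e_pos S_i_pos)
              sinh_half_relation); unfold a, b in *; [left|right]; lra.
Qed.

Lemma galvani_split : phim - phip = a - b.
Proof. unfold a, b. ring. Qed.

Lemma interior_drop_linear : Rabs (phim - phip) < 1 ->
  Rabs (phim - phit 0 - z / (1 + z) * (phim - phip)) <= / 2 * (phim - phip) ^ 2.
Proof.
  rewrite galvani_split. replace (phim - phit 0) with (- b) by (unfold b; ring).
  apply split_interior_linear; [apply zeta_pos; lra|exact sinh_half_relation].
Qed.

Lemma exterior_drop_linear : Rabs (phim - phip) < 1 ->
  Rabs (phit 0 - phip - 1 / (1 + z) * (phim - phip)) <= / 2 * (phim - phip) ^ 2.
Proof.
  rewrite galvani_split.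
  apply split_exterior_linear; [apply zeta_pos; lra|exact sinh_half_relation].
Qed.

Lemma interior_charge_linear : Rabs (phim - phip) < 1 ->
  Rabs (- eps_i * slope km (tanh4 b) - / (/ (eps_i * km) + / (eps_e * kp)) * (phim - phip))
    <= eps_i * km * (phim - phip) ^ 2.
Proof.
  assert (Hz : 0 < z) by (apply zeta_pos; lra).
  assert (Hal : 0 < eps_i * km) by (apply Rmult_lt_0_compat; [lra|apply lam_m_pos; lra]).
  rewrite galvani_split. intro Hsmall.
  replace (/ (/ (eps_i * km) + / (eps_e * kp))) with (eps_i * km * z / (1 + z)).
  - replace (- eps_i * slope km (tanh4 b)) with (- (eps_i * km) * (2 * sinh (b / 2))).
    + exact (split_charge_linear z a b Hz sinh_half_relation Hsmall _ Hal).
    + rewrite slope_tanh4. unfold sinh. rewrite exp_Ropp. field. apply exp_neq_0.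
  - unfold kp, km, z. rewrite (eps_lam_p_zeta eps_i eps_e S_i) by lra. fold km z.
    field. repeat split; apply Rgt_not_eq; nra.
Qed.

End Solution.

Theorem mainTheorem4 :
  forall eps_i eps_e S_i : R, 0 < eps_i -> 0 < eps_e -> 0 < S_i ->
  exists C delta : R, 0 < delta /\
  forall (l_C phim phip : R) (phit d1 d2 : R -> R),
    0 < l_C ->
    IsSolution eps_i eps_e S_i l_C phim phip phit d1 d2 ->
    let lp := lam_p eps_e in
    let lm := lam_m eps_i S_i in
    let z := zeta eps_i eps_e S_i in
    let r := rho S_i l_C in
    let Ap := A_p r z in
    let Am := A_m r z in
    let phiD := phim - phip in
    let phiDi := phim - phit 0 in
    let phiDe := phit 0 - phip in
    phiD = ln (l_C / sqrt S_i) /\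
    (forall x, 0 < x ->
       phit x = phip + 2 * ln ((1 + Ap * exp (- lp * x)) / (1 - Ap * exp (- lp * x)))) /\
    (forall x, x < 0 ->
       phit x = phim + 2 * ln ((1 + Am * exp (lm * x)) / (1 - Am * exp (lm * x)))) /\
    phiDi = - 2 * ln ((1 + Am) / (1 - Am)) /\
    phiDe = 2 * ln ((1 + Ap) / (1 - Ap)) /\
    phiDi + phiDe = phiD /\
    ((0 <= phiDi /\ 0 <= phiDe) \/ (phiDi <= 0 /\ phiDe <= 0)) /\
    (Rabs phiD < delta -> Rabs (phiDi - z / (1 + z) * phiD) <= C * phiD ^ 2) /\
    (Rabs phiD < delta -> Rabs (phiDe - 1 / (1 + z) * phiD) <= C * phiD ^ 2) /\
    (exists Lm Lp : R,
       improper_minf_0 (qt S_i phim phip phit) Lm /\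
       improper_0_pinf (qt S_i phim phip phit) Lp /\
       Lm = - Lp /\
       (Rabs phiD < delta ->
          Rabs (Lm - / (/ (eps_i * lm) + / (eps_e * lp)) * phiD) <= C * phiD ^ 2)) /\
    (exists E1 E2 : R,
       improper_minf_0 (fun x => epsfun eps_i eps_e x * (d1 x) ^ 2) E1 /\
       improper_0_pinf (fun x => epsfun eps_i eps_e x * (d1 x) ^ 2) E2 /\
       E1 + E2 = 8 * lp * eps_e * Ap ^ 2 / (1 - Ap ^ 2)
                 + 8 * lm * eps_i * Am ^ 2 / (1 - Am ^ 2)).
Proof.
  intros eps_i eps_e S_i Hi He HS.
  assert (Hal : 0 < eps_i * lam_m eps_i S_i) by (apply Rmult_lt_0_compat; [lra|apply lam_m_pos; lra]).
  exists (1 + eps_i * lam_m eps_i S_i), 1. split; [lra|].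
  intros l_C phim phip phit d1 d2 Hl Hsol. cbv zeta.
  repeat split.
  - eapply galvani_potential; eassumption.
  - eapply exterior_potential; eassumption.
  - eapply interior_potential; eassumption.
  - eapply interior_drop; eassumption.
  - eapply exterior_drop; eassumption.
  - ring.
  - eapply drops_same_sign; eassumption.
  - intro Hs. apply Rle_mul_sq_weaken with (/ 2); [|lra].
    eapply interior_drop_linear; eassumption.
  - intro Hs. apply Rle_mul_sq_weaken with (/ 2); [|lra].
    eapply exterior_drop_linear; eassumption.
  - do 2 eexists. split; [eapply interior_charge; eassumption|].
    split; [eapply exterior_charge; eassumption|].
    split; [eapply charge_balance; eassumption|].
    intro Hs. apply Rle_mul_sq_weaken with (eps_i * lam_m eps_i S_i); [|lra].
    eapply interior_charge_linear; eassumption.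
  - do 2 eexists. split; [eapply interior_energy; eassumption|].
    split; [eapply exterior_energy; eassumption|].
    erewrite A_p_solution, A_m_solution by eassumption. ring.
Qed.
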